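(* Let $(X,T)$ be a topological dynamical system and $x\in X$. Then for every non-atomic $T$-invariant Borel probability measure $\mu$ on $X$, $\mu(BP(x))=0$, where $BP(x)=\{y\in X:(x,y)\text{ is Banach proximal}\}$.
   Context: A topological dynamical system $(X,T)$ consists of a non-empty compact metric space $(X,d)$ and a continuous map $T:X\to X$. A measure $\mu$ is non-atomic if $\mu(\{z\})=0$ for every $z\in X$. A set $F\subset\mathbb{Z}_+$ has Banach density one if for every $\lambda<1$ there is $N\ge1$ with $\#(F\cap I)\ge\lambda\,\#(I)$ for every interval of integers $I\subset\mathbb{Z}_+$ with $\#(I)\ge N$. A pair $(x,y)$ is Banach proximal if for every $\varepsilon>0$ the set $\{n\in\mathbb{Z}_+: d(T^nx,T^ny)<\varepsilon\}$ has Banach density one. *)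

From HB Require Import structures.
From mathcomp Require Import all_boot all_order all_algebra.
From mathcomp Require Import all_classical all_reals all_analysis.
Set Implicit Arguments. Unset Strict Implicit. Unset Printing Implicit Defensive.
Import Order.TTheory GRing.Theory Num.Theory.
Local Open Scope classical_set_scope.
Local Open Scope ring_scope.

Notation borel X := (g_sigma_algebraType (@open X)).

Definition banach_density_one (R : realType) (F : set nat) : Prop :=
  forall lam : R, lam < 1 ->
    exists N : nat, (1 <= N)%N /\
      forall a k : nat, (N <= k)%N ->
        lam * k%:R <= \sum_(a <= n < a + k | n \in F) (1 : R).

Definition banach_proximal (R : realType) (X : pseudoPMetricType R)
    (T : X -> X) (x y : X) : Prop :=
  forall eps : R, 0 < eps ->
    banach_density_one R [set n : nat | ball (iter n T x) eps (iter n T y)].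

Definition BP (R : realType) (X : pseudoPMetricType R) (T : X -> X) (x : X)
  : set X := [set y | banach_proximal T x y].

(** Fix [d > 0] and let [U_n] be the set of points whose [n]-th iterate lies in
    the [d]-ball around [T^n x].  By invariance [mu U_n] is the measure of a
    [d]-ball, which is at most [eta] for every centre once [d] is small, because
    [mu] is non-atomic and [X] is compact.  A Banach proximal point lies in at
    least half of [U_0, ..., U_(k-1)] for all large [k], so by Markov's
    inequality the points doing so for every [k >= N] form a set of measure at
    most [2 eta]; these sets increase with [N] and exhaust [BP(x)]. *)
From HB Require Import structures.
From mathcomp Require Import all_boot all_order all_algebra.
From mathcomp Require Import all_classical all_reals all_analysis.
From mathcomp Require Import measurable_realfun lra.
Import Order.TTheory GRing.Theory Num.Theory.
Local Open Scope classical_set_scope.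
Local Open Scope ring_scope.

Lemma open_measurable_borel (X : ptopologicalType) (A : set X) :
  open A -> measurable (A : set (borel X)).
Proof. exact: sub_sigma_algebra. Qed.

Lemma continuous_iter (X : topologicalType) (T : X -> X) (n : nat) :
  continuous T -> continuous (iter n T).
Proof.
move=> cT; elim: n => [|n IH] z /=; first exact: cvg_id.
exact: continuous_comp (IH z) (cT _).
Qed.

Lemma measurable_ge_fun d (Y : measurableType d) (R : realType)
    (f : Y -> R) (c : R) :
  measurable_fun setT f -> measurable [set y | c <= f y].
Proof.
move=> mf; have := mf measurableT _ (measurable_itv `[c, +oo[).
by rewrite setTI; congr measurable; apply/seteqP; split => y /=;
  rewrite in_itv /= andbT.
Qed.

Lemma inv_succ_lt {R : realType} {e : R} :
  0 < e -> exists m : nat, m.+1%:R^-1 < e.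
Proof.
move=> e0; exists (Num.trunc e^-1).
rewrite -[X in _ < X]invrK ltf_pV2 ?posrE ?invr_gt0 //; exact: truncnS_gt.
Qed.

Section pseudometric_balls.
Context {R : realType} {X : pseudoPMetricType R}.

(* Balls of a pseudometric space need not be open, hence the interiors. *)
Lemma ball_half_sub_interior (y : X) (e : R) :
  0 < e -> ball y (e / 2) `<=` (ball y e)^°.
Proof.
move=> e0 z yz; apply: filterS (nbhsx_ballx z (e / 2) _); last first.
  by rewrite divr_gt0.
by move=> w zw; rewrite [e]splitr; exact: ball_triangle yz zw.
Qed.

Lemma interior_ball_center (y : X) (e : R) : 0 < e -> (ball y e)^° y.
Proof.
by move=> e0; apply: ball_half_sub_interior => //; apply: ballxx; rewrite divr_gt0.
Qed.

Lemma bigcap_interior_balls (w : X) : hausdorff_space X ->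
  \bigcap_n (ball w n.+1%:R^-1)^° = [set w].
Proof.
move=> hausX; apply/seteqP; split => [y wy|_ -> n _]; last first.
  by apply: interior_ball_center; rewrite invr_gt0.
apply/esym/hausX => A B /nbhs_ballP[r r0 rA] /nbhs_ballP[s s0 sB].
have [n nr] := inv_succ_lt r0.
exists y; split; last by apply: sB; exact: ballxx.
by apply: rA; apply: (le_ball (ltW nr)); apply: interior_subset; exact: wy.
Qed.

End pseudometric_balls.

Section counting_markov.
Context {d : measure_display} {Y : measurableType d} {R : realType}.
Variable mu : {measure set Y -> \bar R}.

Lemma measure_count_ge_le (U : nat -> set Y) (a b : nat) (c : R) :
  (forall n, measurable (U n)) -> 0 <= c ->
  (c%:E * mu [set y | (c <= \sum_(a <= n < b) \1_(U n) y)%R]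
    <= \sum_(a <= n < b) mu (U n))%E.
Proof.
move=> mU c0; set D := [set y | _ <= _].
have mcount : measurable_fun setT (fun y => \sum_(a <= n < b) \1_(U n) y : R).
  by apply: measurable_sum => n; exact: measurable_indic.
have mD : measurable D by exact: measurable_ge_fun.
have -> : (\sum_(a <= n < b) mu (U n) =
           \int[mu]_y (\sum_(a <= n < b) \1_(U n) y)%:E)%E.
  under eq_integral do rewrite -sumEFin.
  rewrite ge0_integral_sum //; last first.
    by move=> n; apply/measurable_EFinP; exact: measurable_indic.
  by apply: eq_bigr => n _; rewrite integral_indic // setIT.
have -> : mu D = (\int[mu]_y (\1_D y)%:E)%E by rewrite integral_indic // setIT.
rewrite -ge0_integralZl_EFin //; last first.
  by apply/measurable_EFinP; exact: measurable_indic.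
apply: ge0_le_integral => //.
- by move=> y _; rewrite -EFinM lee_fin mulr_ge0.
- by apply: measurable_funeM; apply/measurable_EFinP; exact: measurable_indic.
- by apply/measurable_EFinP.
- move=> y _; rewrite -EFinM lee_fin indicE.
  case: (boolP (y \in D)) => [/set_mem yD|_]; first by rewrite mulr1.
  by rewrite mulr0; apply: sumr_ge0.
Qed.

Lemma measure_nondecreasing_bigcup_le (F : nat -> set Y) (c : \bar R) :
  (forall n, measurable (F n)) -> nondecreasing_seq F ->
  (forall n, mu (F n) <= c)%E -> (mu (\bigcup_n F n) <= c)%E.
Proof.
move=> mF ndF Fc.
have mUF : measurable (\bigcup_n F n) by exact: bigcupT_measurable.
have cvgF := @nondecreasing_cvg_mu _ _ _ mu _ mF mUF ndF.
rewrite -(cvg_lim _ cvgF) //; apply: lime_le; first exact: cvgP cvgF.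
exact: nearW.
Qed.

End counting_markov.

Section small_balls.
Context {R : realType} {X : pseudoPMetricType R}.
Variable mu : {finite_measure set (borel X) -> \bar R}.
Hypothesis hausX : hausdorff_space X.

Lemma measure_interior_balls_cvg (w : X) :
  mu ((ball w n.+1%:R^-1)^° : set (borel X)) @[n --> \oo] --> mu [set w].
Proof.
pose F n := (ball w n.+1%:R^-1)^° : set (borel X).
have mF n : measurable (F n).
  by apply: open_measurable_borel; exact: open_interior.
rewrite -(bigcap_interior_balls w hausX).
apply: (@nonincreasing_cvg_mu _ _ _ mu F) => //.
- by rewrite -ge0_fin_numE ?measure_ge0 // fin_num_measure.
- exact: bigcapT_measurable.
- move=> m n mn; apply/subsetPset/interiorS/le_ball.
  by rewrite lef_pV2 ?posrE // ler_nat.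
Qed.

Lemma uniformly_small_balls :
  compact [set: X] -> (forall z : borel X, mu [set z] = 0%E) ->
  forall eta : R, 0 < eta ->
  exists2 d : R, 0 < d &
    forall z : X, (mu ((ball z d)^° : set (borel X)) <= eta%:E)%E.
Proof.
(* Otherwise a cluster point of the centres of heavy shrinking balls is an atom. *)
move=> compX nonatomic eta eta0; apply: contrapT => no_radius.
have big_at m : exists z : X,
    (eta%:E < mu ((ball z m.+1%:R^-1)^° : set (borel X)))%E.
  apply: contrapT => small; apply: no_radius.
  exists m.+1%:R^-1; first by rewrite invr_gt0.
  by move=> z; rewrite leNgt; apply/negP => ?; apply: small; exists z.
have [z zbig] := choice big_at.
have [w [_ clw]] := compX (z @ \oo) _ filterT.
have wbig r : 0 < r -> (eta%:E < mu ((ball w r)^° : set (borel X)))%E.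
  move=> r0; have r4 : 0 < r / 4 by rewrite divr_gt0.
  have [M Mr] := inv_succ_lt r4.
  have late : (z @ \oo) [set z m | m in [set m | (M <= m)%N]].
    by exists M => // n Mn; exists n.
  have [_ [[m Mm <-] wz]] := clw _ _ late (nbhsx_ballx w (r / 4) r4).
  apply: lt_le_trans (zbig m) _; apply: le_measure; rewrite ?inE.
  - by apply: open_measurable_borel; exact: open_interior.
  - by apply: open_measurable_borel; exact: open_interior.
  move=> q /interior_subset zq; apply: ball_half_sub_interior => //.
  apply: le_ball (ball_triangle wz zq).
  have : m.+1%:R^-1 <= M.+1%:R^-1 :> R by rewrite lef_pV2 ?posrE // ler_nat.
  move: (m.+1%:R^-1) (M.+1%:R^-1) Mr => rho s; lra.
have : (eta%:E <= mu [set w])%E.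
  have cvgw := measure_interior_balls_cvg w.
  rewrite -(cvg_lim _ cvgw) //; apply: lime_ge; first exact: cvgP cvgw.
  by apply: nearW => n; apply/ltW/wbig; rewrite invr_gt0.
by rewrite nonatomic lee_fin leNgt eta0.
Qed.

End small_balls.

Section orbit_visits.
Context {R : realType} {X : pseudoPMetricType R}.
Variables (T : X -> X) (x : X).

Definition near_orbit (e : R) (n : nat) : set X :=
  iter n T @^-1` (ball (iter n T x) e)^°.

Definition near_orbit_count (e : R) (a k : nat) (y : X) : R :=
  \sum_(a <= n < a + k) \1_(near_orbit e n) y.

Definition ball_count (e : R) (a k : nat) (y : X) : R :=
  \sum_(a <= n < a + k | n \in [set n | ball (iter n T x) e (iter n T y)]) 1.

Lemma ball_count_half_le (e : R) (a k : nat) (y : X) :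
  0 < e -> ball_count (e / 2) a k y <= near_orbit_count e a k y.
Proof.
move=> e0; rewrite /ball_count /near_orbit_count big_mkcond /=.
apply: ler_sum => n _; rewrite indicE; case: ifP => // /set_mem close.
by rewrite mem_set //; exact: ball_half_sub_interior.
Qed.

Lemma near_orbit_count_le (e e' : R) (a k : nat) (y : X) :
  e <= e' -> near_orbit_count e a k y <= ball_count e' a k y.
Proof.
move=> ee'; rewrite /ball_count /near_orbit_count [leRHS]big_mkcond /=.
apply: ler_sum => n _; rewrite indicE.
case: (boolP (y \in _)) => [/set_mem /interior_subset close|_].
  by rewrite mem_set //=; exact: le_ball close.
by case: ifP.
Qed.

Definition frequent_visitors (e : R) (N : nat) : set X :=
  \bigcap_(k in [set k | (N <= k)%N])
    [set y | 2^-1 * k%:R <= near_orbit_count e 0 k y].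

Lemma nondecreasing_frequent_visitors (e : R) :
  nondecreasing_seq (frequent_visitors e).
Proof.
move=> N M NM; apply/subsetPset => y freq k Mk.
exact/freq/(leq_trans NM Mk).
Qed.

Lemma BP_sub_frequent_visitors (e : R) :
  0 < e -> BP T x `<=` \bigcup_N frequent_visitors e N.
Proof.
move=> e0 y BPy; have half_lt1 : 2^-1 < 1 :> R by rewrite invf_lt1 ?ltr1n.
have [N [_ dense]] := BPy _ (divr_gt0 e0 (ltr0n _ 2)) _ half_lt1.
exists N => // k Nk.
by apply: le_trans (dense 0%N k Nk) _; exact: ball_count_half_le.
Qed.

Hypothesis contT : continuous T.

Lemma open_near_orbit (e : R) (n : nat) : open (near_orbit e n).
Proof.
apply: open_comp; last exact: open_interior.
by move=> z _; exact: continuous_iter.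
Qed.

Lemma measurable_near_orbit_count (e : R) (a k : nat) :
  measurable_fun setT (near_orbit_count e a k : borel X -> R).
Proof.
apply: measurable_sum => n; apply: measurable_indic.
apply: open_measurable_borel; exact: open_near_orbit.
Qed.

Lemma measurable_near_orbit_count_ge (e c : R) (a k : nat) :
  measurable ([set y | c <= near_orbit_count e a k y] : set (borel X)).
Proof. apply: measurable_ge_fun; exact: measurable_near_orbit_count. Qed.

(* Passing to interiors of balls makes every event open; the sandwich between
   [ball_count] and [near_orbit_count] shows that nothing is lost. *)
Lemma BP_countableE : BP T x =
  \bigcap_m \bigcap_j \bigcup_N \bigcap_a \bigcap_(k in [set k | (N <= k)%N])
    [set y | (1 - j.+1%:R^-1) * k%:R <= near_orbit_count m.+1%:R^-1 a k y].
Proof.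
apply/seteqP; split => y.
- move=> BPy m _ j _.
  have e0 : 0 < m.+1%:R^-1 :> R by rewrite invr_gt0.
  have lam1 : 1 - j.+1%:R^-1 < 1 :> R by rewrite ltrBlDr ltrDl invr_gt0.
  have [N [_ dense]] := BPy _ (divr_gt0 e0 (ltr0n _ 2)) _ lam1.
  exists N => // a _ k Nk.
  by apply: le_trans (dense a k Nk) _; exact: ball_count_half_le.
- move=> freq e e0 lam lam1.
  have [m me] := inv_succ_lt e0.
  have [j jlam] : exists j : nat, j.+1%:R^-1 < 1 - lam.
    by apply: inv_succ_lt; rewrite subr_gt0.
  have [N _ dense] := freq m I j I.
  exists (maxn N 1); split => [|a k]; first exact: leq_maxr.
  rewrite geq_max => /andP[Nk _].
  change (lam * k%:R <= ball_count e a k y).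
  apply: le_trans (near_orbit_count_le _ _ a k y (ltW me)).
  apply: le_trans (dense a I k Nk); apply: ler_wpM2r => //.
  by move: (j.+1%:R^-1) jlam => s; lra.
Qed.

Lemma measurable_frequent_visitors (e : R) (N : nat) :
  measurable (frequent_visitors e N : set (borel X)).
Proof.
apply: bigcap_measurableType => k _.
exact: measurable_near_orbit_count_ge.
Qed.

Lemma measurable_BP : measurable (BP T x : set (borel X)).
Proof.
rewrite BP_countableE; apply: bigcapT_measurable => m.
apply: bigcapT_measurable => j; apply: bigcupT_measurable => N.
apply: bigcapT_measurable => a; apply: bigcap_measurableType => k _.
exact: measurable_near_orbit_count_ge.
Qed.

End orbit_visits.

Section invariant_measure.
Context {R : realType} {X : pseudoPMetricType R}.
Variables (T : X -> X) (x : X).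
Hypothesis contT : continuous T.
Variable mu : {finite_measure set (borel X) -> \bar R}.
Hypothesis invT : forall A : set (borel X), measurable A ->
  mu (T @^-1` A) = mu A.

Lemma measure_iter_preimage_open (n : nat) (A : set X) :
  open A -> mu (iter n T @^-1` A : set (borel X)) = mu A.
Proof.
elim: n A => [//|n IH] A oA.
have oTA : open (T @^-1` A) by apply: open_comp => // z _; exact: contT.
rewrite -[LHS]/(mu (iter n T @^-1` (T @^-1` A))) IH //.
by apply: invT; exact: open_measurable_borel.
Qed.

Lemma measure_near_orbit (e : R) (n : nat) :
  mu (near_orbit T x e n) = mu (ball (iter n T x) e)^°.
Proof. by apply: measure_iter_preimage_open; exact: open_interior. Qed.

(* Markov's inequality for the number of visits during [0, N]. *)
Lemma measure_frequent_visitors_le (e eta : R) (N : nat) :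
  (forall z : X, mu ((ball z e)^° : set (borel X)) <= eta%:E)%E ->
  (mu (frequent_visitors T x e N) <= (2 * eta)%:E)%E.
Proof.
move=> small_balls; set k := N.+1.
pose D : set (borel X) := [set y | 2^-1 * k%:R <= near_orbit_count T x e 0 k y].
have mD : measurable D by exact: measurable_near_orbit_count_ge.
have mnear n : measurable (near_orbit T x e n : set (borel X)).
  by apply: open_measurable_borel; exact: open_near_orbit.
have markov : ((2^-1 * k%:R)%:E * mu D
    <= \sum_(0 <= n < 0 + k) mu (near_orbit T x e n))%E.
  by apply: measure_count_ge_le => //; rewrite mulr_ge0 ?invr_ge0.
have visits : (\sum_(0 <= n < 0 + k) mu (near_orbit T x e n) <= (k%:R * eta)%:E)%E.
  apply: le_trans (_ : \sum_(0 <= n < 0 + k) eta%:E <= _)%E.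
    by apply: lee_sum => n _; rewrite measure_near_orbit.
  by rewrite sumEFin sumr_const_nat add0n subn0 mulr_natl.
have muDfin : mu D \is a fin_num by exact: fin_num_measure.
apply: (@le_trans _ _ (mu D)).
  apply: le_measure; rewrite ?inE //; first exact: measurable_frequent_visitors.
  by move=> y freq; exact: (freq k (leqnSn N)).
have := le_trans markov visits.
rewrite -(fineK muDfin) -EFinM !lee_fin.
have k0 : 0 < k%:R :> R by rewrite ltr0n.
by move: (fine (mu D)) (k%:R : R) k0 => m r r0; nra.
Qed.

End invariant_measure.

Theorem mainTheorem14 (R : realType) (X : pseudoPMetricType R)
  (hausX : hausdorff_space X) (compX : compact [set: X])
  (T : X -> X) (contT : continuous T) (x : X)
  (mu : probability (borel X) R)
  (invT : forall A : set (borel X), measurable A ->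
            mu (T @^-1` A) = mu A)
  (nonatomic : forall z : borel X, mu [set z] = 0%E) :
  measurable (BP T x : set (borel X)) /\ mu (BP T x) = 0%E.
Proof.
have mBP := measurable_BP T x contT; split => //.
apply/eqP; rewrite eq_le measure_ge0 andbT.
apply/lee_addgt0Pr => eta eta0; rewrite add0e.
have [d d0 small] := uniformly_small_balls mu hausX compX nonatomic
  _ (divr_gt0 eta0 (ltr0n _ 2)).
have freq_le N : (mu (frequent_visitors T x d N) <= eta%:E)%E.
  rewrite -[eta](@divfK _ 2) // mulrC.
  exact: measure_frequent_visitors_le.
have mUfreq : measurable (\bigcup_N frequent_visitors T x d N : set (borel X)).
  by apply: bigcupT_measurable => N; exact: measurable_frequent_visitors.
apply: (@le_trans _ _ (mu (\bigcup_N frequent_visitors T x d N))).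
  by apply: le_measure; rewrite ?inE //; exact: BP_sub_frequent_visitors.
apply: measure_nondecreasing_bigcup_le freq_le.
- exact: measurable_frequent_visitors.
- exact: nondecreasing_frequent_visitors.
Qed.
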